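(* Let $\rho\in(0,1)$, let $N_1,N_2$ be positive integers, $n=N_1+N_2$, and let $X_0(1)>X_0(2)>\cdots>X_0(n)$ be integers. Put $Y^{(1)}=(X_0(1),\dots,X_0(N_1))$, $Y^{(2)}=(X_0(N_1+1),\dots,X_0(N_1+N_2))$ and $X=(X_0(1),\dots,X_0(n))$. Then for every $0\le k\le N_1-1$ and every $z\in\mathbb{Z}$, $$h^{n,X}_{k+N_2}(0,z)=\sum_{z_3\in\mathbb{Z}}\big(Q^{N_2}(z_3,z)-G^{Y^{(2)}}_{0,N_2}(z_3,z)\big)\,h^{N_1,Y^{(1)}}_k(0,z_3).$$
   Context: $Q(x,y)=(1-\rho)^{x-y-1}\rho\,\mathbf{1}_{x>y}$ on $\mathbb{Z}\times\mathbb{Z}$, $Q^m$ its $m$-th matrix power. For $f:\mathbb{Z}\to\mathbb{R}$ let $(Q^* )^{-1}f(z)=\frac1\rho f(z-1)-\frac{1-\rho}{\rho}f(z)$. For $m\ge1$, integers $Y(1)>\cdots>Y(m)$, and $0\le k<m$, $h^{m,Y}_k(l,z)$ ($0\le l\le k$, $z\in\mathbb{Z}$) is the unique solution of: $(Q^* )^{-1}h^{m,Y}_k(l,\cdot)(z)=h^{m,Y}_k(l+1,z)$ for $l<k$; $h^{m,Y}_k(k,z)=\rho(1-\rho)^{Y(m-k)-z-1}$; $h^{m,Y}_k(l,Y(m-l))=0$ for $l<k$. Further $G^{Y}_{0,m}(z_1,z_2)=\sum_{k=0}^{m-1}\frac{1-\rho}{\rho}Q^{m-k}(z_1,Y(m-k))\,h^{m,Y}_k(0,z_2)$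 for $z_1,z_2\in\mathbb{Z}$. *)

From Stdlib Require Import Reals ZArith Lra Lia.
From Coquelicot Require Import Coquelicot.
Open Scope R_scope.

Fixpoint sumR (n : nat) (f : nat -> R) : R :=
  match n with
  | O => 0
  | S n' => sumR n' f + f n'
  end.

Definition Q (rho : R) (x y : Z) : R :=
  if Z.ltb y x then powerRZ (1 - rho) (x - y - 1) * rho else 0.

(* Q^0 = identity and
   Q^(m+1)(x,y) = sum_{w in Z} Q(x,w) Q^m(w,y); since Q(x,w) = 0 unless w < x
   and Q^m(w,y) = 0 unless y <= w, only w in [y, x-1] contribute, so the
   (exact) matrix product is the finite sum below over w = y + i, 0 <= i < x-y. *)
Fixpoint Qpow (rho : R) (m : nat) (x y : Z) : R :=
  match m with
  | O => if Z.eqb x y then 1 else 0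
  | S m' => sumR (Z.to_nat (x - y))
              (fun i => Q rho x (y + Z.of_nat i)%Z * Qpow rho m' (y + Z.of_nat i)%Z y)
  end.

Definition Qstar_inv (rho : R) (f : Z -> R) (z : Z) : R :=
  / rho * f (z - 1)%Z - (1 - rho) / rho * f z.

(* h : nat -> Z -> R (h l z, meaningful for 0 <= l <= k) is the (unique)
   solution h^{m,Y}_k of the defining system; Y is indexed from 1. *)
Definition is_h (rho : R) (m : nat) (Y : nat -> Z) (k : nat) (h : nat -> Z -> R) : Prop :=
  (forall l, (l < k)%nat -> forall z, Qstar_inv rho (h l) z = h (S l) z) /\
  (forall z, h k z = rho * powerRZ (1 - rho) (Y (m - k)%nat - z - 1)) /\
  (forall l, (l < k)%nat -> h l (Y (m - l)%nat) = 0).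

Definition G0 (rho : R) (m : nat) (Y : nat -> Z) (H : nat -> nat -> Z -> R) (z1 z2 : Z) : R :=
  sumR m (fun k => (1 - rho) / rho * Qpow rho (m - k) z1 (Y (m - k)%nat) * H k O z2).

Definition sumZ_to (f : Z -> R) (s : R) : Prop :=
  exists a b : R,
    is_series (fun n : nat => f (Z.of_nat n)) a /\
    is_series (fun n : nat => f (- Z.of_nat (S n))%Z) b /\
    s = a + b.

From Stdlib Require Import Reals ZArith Lra Lia.
From Coquelicot Require Import Coquelicot.
Open Scope R_scope.

(* For [0 <= l <= m] (here [m = N2], [Y = Y^(2)]) let
   [K_l(z3, z) = Q^(m-l)(z3, z) - sum_k (1-rho)/rho Q^(m-k)(z3, Y(m-k)) h_k(l, z)],
   with [h_k(l, .) = 0] for [l > k], so that [K_0 = Q^m - G^Y_(0,m)]. In the variable [z],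
   [Qstar_inv] maps [K_l] to [K_(l+1)], [K_m] is the identity and [K_l(z3, .)] vanishes at
   [Y(m-l)]. Hence [z |-> sum_z3 K_l(z3, z) h^(N1,Y1)_k(0, z3)] solves the same system as
   [h^(n,X)_(k+N2)(l, .)], whose level [N2] is [h^(N1,Y1)_k(0, .)] because the two systems
   coincide from there on. A solution is pinned down by one value, since
   [Qstar_inv f = 0] means [f(z-1) = (1-rho) f(z)]. The sum over [z3] is finite: [K_0(z3, z)]
   vanishes for [z3 < min(z, Y(m))] as [Q^j] is supported on [x >= y], and for
   [z3 > max(z, Y(1))] by the same uniqueness argument, run downwards from [K_m]. *)

Lemma nat_down_ind (P : nat -> Prop) (N : nat) :
  P N -> (forall l, (l < N)%nat -> P (S l) -> P l) ->
  forall l, (l <= N)%nat -> P l.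
Proof.
  intros HN Hstep l Hl.
  remember (N - l)%nat as d eqn:Hd. revert l Hl Hd.
  induction d as [|d IH]; intros l Hl Hd.
  - replace l with N by lia. exact HN.
  - apply Hstep; [lia|]. apply IH; lia.
Qed.

Lemma strict_decr_antitone (u : nat -> Z) (a b : nat) :
  (forall i, (a <= i)%nat -> (i < b)%nat -> (u (S i) < u i)%Z) ->
  forall i j, (a <= i <= j)%nat -> (j <= b)%nat -> (u j <= u i)%Z.
Proof.
  intros Hdec i j [Hai Hij]. induction Hij as [|j Hij IH]; intros Hjb; [lia|].
  specialize (IH ltac:(lia)). specialize (Hdec j ltac:(lia) ltac:(lia)). lia.
Qed.

Lemma sumR_ext n f g : (forall i, (i < n)%nat -> f i = g i) -> sumR n f = sumR n g.
Proof.
  induction n as [|n IH]; intros H; simpl; [reflexivity|].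
  rewrite IH by (intros; apply H; lia). rewrite H by lia. reflexivity.
Qed.

Lemma sumR_eq0 n f : (forall i, (i < n)%nat -> f i = 0) -> sumR n f = 0.
Proof.
  induction n as [|n IH]; intros H; simpl; [reflexivity|].
  rewrite IH by (intros; apply H; lia). rewrite H by lia. ring.
Qed.

Lemma sumR_single n f j : (j < n)%nat ->
  (forall i, (i < n)%nat -> i <> j -> f i = 0) -> sumR n f = f j.
Proof.
  induction n as [|n IH]; intros Hj H; simpl; [lia|].
  destruct (Nat.eq_dec j n) as [->|Hne].
  - rewrite sumR_eq0 by (intros i Hi; apply H; lia). ring.
  - rewrite IH by (lia || (intros; apply H; lia)). rewrite (H n) by lia. ring.
Qed.

Lemma sumR_scal_l n c f : sumR n (fun i => c * f i) = c * sumR n f.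
Proof. induction n as [|n IH]; simpl; [ring|]. rewrite IH. ring. Qed.

Lemma sumR_extend (u : nat -> R) M N : (forall i, (M <= i)%nat -> u i = 0) ->
  (M <= N)%nat -> sumR N u = sumR M u.
Proof.
  intros H HN. induction HN as [|N HN IH]; [reflexivity|].
  simpl. rewrite IH, H by lia. ring.
Qed.

Lemma sum_n_sumR (u : nat -> R) N : sum_n u N = sumR (S N) u.
Proof.
  induction N as [|N IH].
  - rewrite sum_O. simpl. ring.
  - rewrite sum_Sn, IH. reflexivity.
Qed.

Lemma is_series_sumR (u : nat -> R) M : (forall i, (M <= i)%nat -> u i = 0) ->
  is_series u (sumR M u).
Proof.
  intros H. change (is_lim_seq (sum_n u) (sumR M u)).
  apply is_lim_seq_ext_loc with (u := fun _ => sumR M u).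
  - exists M. intros N HN. rewrite sum_n_sumR. symmetry. apply sumR_extend; auto.
  - apply is_lim_seq_const.
Qed.

Definition sumZ (a : Z) (n : nat) (F : Z -> R) : R := sumR n (fun i => F (a + Z.of_nat i)%Z).

Lemma sumZ_split a n1 n2 F :
  sumZ a (n1 + n2) F = sumZ a n1 F + sumZ (a + Z.of_nat n1) n2 F.
Proof.
  unfold sumZ. induction n2 as [|n2 IH].
  - rewrite Nat.add_0_r. simpl. ring.
  - rewrite Nat.add_succ_r. simpl. rewrite IH.
    replace (a + Z.of_nat (n1 + n2))%Z with (a + Z.of_nat n1 + Z.of_nat n2)%Z by lia. ring.
Qed.

Lemma sumZ_cons a n F : sumZ a (S n) F = F a + sumZ (a + 1) n F.
Proof.
  rewrite <- Nat.add_1_l, sumZ_split. unfold sumZ at 1. simpl.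
  rewrite Z.add_0_r. ring.
Qed.

Lemma sumZ_eq0 a n F : (forall z, (a <= z < a + Z.of_nat n)%Z -> F z = 0) -> sumZ a n F = 0.
Proof. intros H. apply sumR_eq0. intros i Hi. apply H. lia. Qed.

Lemma sumZ_single a n F z : (a <= z < a + Z.of_nat n)%Z ->
  (forall w, w <> z -> F w = 0) -> sumZ a n F = F z.
Proof.
  intros Hz H. unfold sumZ. rewrite (sumR_single _ _ (Z.to_nat (z - a))).
  - f_equal. lia.
  - lia.
  - intros i _ Hi. apply H. lia.
Qed.

Lemma sumZ_window F P N a n :
  (forall z, (z < P \/ P + Z.of_nat N <= z)%Z -> F z = 0) ->
  (a <= P)%Z -> (P + Z.of_nat N <= a + Z.of_nat n)%Z ->
  sumZ a n F = sumZ P N F.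
Proof.
  intros H Ha Hn.
  set (n1 := Z.to_nat (P - a)).
  replace n with (n1 + (N + (n - n1 - N)))%nat by lia.
  rewrite !sumZ_split.
  replace (a + Z.of_nat n1)%Z with P by lia.
  rewrite (sumZ_eq0 a n1), (sumZ_eq0 (P + Z.of_nat N)) by (intros; apply H; lia).
  ring.
Qed.

Lemma sumZ_neg M F : sumZ (- Z.of_nat M) M F = sumR M (fun i => F (- Z.of_nat (S i))%Z).
Proof.
  induction M as [|M IH]; [reflexivity|].
  rewrite sumZ_cons. cbn [sumR]. rewrite <- IH.
  replace (- Z.of_nat (S M) + 1)%Z with (- Z.of_nat M)%Z by lia. ring.
Qed.

Lemma sumZ_to_finite_support F P N :
  (forall z, (z < P \/ P + Z.of_nat N <= z)%Z -> F z = 0) ->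
  sumZ_to F (sumZ P N F).
Proof.
  intros H.
  set (M := (Z.to_nat (Z.abs P) + N)%nat).
  exists (sumR M (fun i => F (Z.of_nat i))), (sumR M (fun i => F (- Z.of_nat (S i))%Z)).
  split; [|split].
  - apply is_series_sumR. intros i Hi. apply H. lia.
  - apply is_series_sumR. intros i Hi. apply H. lia.
  - rewrite <- (sumZ_window F P N (- Z.of_nat M) (M + M)) by (auto; lia).
    rewrite sumZ_split, sumZ_neg, Rplus_comm.
    replace (- Z.of_nat M + Z.of_nat M)%Z with 0%Z by lia. reflexivity.
Qed.

Lemma geometric_recurrence_zero (r : R) (d : Z -> R) (lo hi a : Z) : r <> 0 ->
  (forall z, (lo < z <= hi)%Z -> d (z - 1)%Z = r * d z) ->
  (lo <= a <= hi)%Z -> d a = 0 -> forall z, (lo <= z <= hi)%Z -> d z = 0.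
Proof.
  intros Hr Hrec Ha Hda.
  apply (Z.order_induction' (fun z => (lo <= z <= hi)%Z -> d z = 0)) with (z := a).
  - intros x y ->; reflexivity.
  - intros _; exact Hda.
  - intros w Hw IH Hw'. rewrite <- Z.add_1_r in *.
    assert (E := Hrec (w + 1)%Z ltac:(lia)).
    replace (w + 1 - 1)%Z with w in E by lia. rewrite IH in E by lia.
    destruct (Rmult_integral _ _ (eq_sym E)); [contradiction | assumption].
  - intros w Hw IH Hw'. rewrite <- Z.sub_1_r in *.
    rewrite Hrec, IH by lia. ring.
Qed.

Section Transition.

Variable rho : R.
Hypothesis Hrho : 0 < rho < 1.

Lemma Qstar_inv_ext f g z : (forall w, f w = g w) -> Qstar_inv rho f z = Qstar_inv rho g z.
Proof. intros H. unfold Qstar_inv. rewrite !H. reflexivity. Qed.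

Lemma Qstar_inv_sumR n F z :
  Qstar_inv rho (fun w => sumR n (fun i => F i w)) z = sumR n (fun i => Qstar_inv rho (F i) z).
Proof.
  unfold Qstar_inv. induction n as [|n IH]; simpl; [ring|]. rewrite <- IH. ring.
Qed.

Lemma Qstar_inv_scal_l c f z : Qstar_inv rho (fun w => c * f w) z = c * Qstar_inv rho f z.
Proof. unfold Qstar_inv. ring. Qed.

Lemma Qstar_inv_scal_r c f z : Qstar_inv rho (fun w => f w * c) z = Qstar_inv rho f z * c.
Proof. unfold Qstar_inv. ring. Qed.

Lemma Qstar_inv_minus f g z :
  Qstar_inv rho (fun w => f w - g w) z = Qstar_inv rho f z - Qstar_inv rho g z.
Proof. unfold Qstar_inv. ring. Qed.

Lemma Qstar_inv_geom a z : Qstar_inv rho (fun w => rho * powerRZ (1 - rho) (a - w - 1)) z = 0.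
Proof.
  unfold Qstar_inv.
  replace (a - (z - 1) - 1)%Z with (a - z - 1 + 1)%Z by lia.
  rewrite powerRZ_add by lra. simpl. field. lra.
Qed.

Lemma Qstar_inv_eq_interval f g lo hi a :
  (forall z, (lo < z <= hi)%Z -> Qstar_inv rho f z = Qstar_inv rho g z) ->
  (lo <= a <= hi)%Z -> f a = g a -> forall z, (lo <= z <= hi)%Z -> f z = g z.
Proof.
  intros Heq Ha Hfa z Hz. apply Rminus_diag_uniq.
  apply (geometric_recurrence_zero (1 - rho) (fun w => f w - g w) lo hi a); auto; try lra.
  intros w Hw.
  assert (E : f (w - 1)%Z - g (w - 1)%Z - (1 - rho) * (f w - g w)
              = rho * (Qstar_inv rho f w - Qstar_inv rho g w)) by (unfold Qstar_inv; field; lra).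
  rewrite Heq in E by exact Hw. lra.
Qed.

Lemma Qstar_inv_eq f g a :
  (forall z, Qstar_inv rho f z = Qstar_inv rho g z) -> f a = g a -> forall z, f z = g z.
Proof.
  intros Heq Ha z. apply (Qstar_inv_eq_interval f g (Z.min a z) (Z.max a z) a); auto; lia.
Qed.

Lemma Q_translate x y x' y' : (x - y = x' - y')%Z -> Q rho x y = Q rho x' y'.
Proof.
  intros H. unfold Q.
  destruct (Z.ltb_spec y x), (Z.ltb_spec y' x'); try lia; [|reflexivity].
  replace (x' - y' - 1)%Z with (x - y - 1)%Z by lia. reflexivity.
Qed.

Lemma Qpow_translate m x y : Qpow rho m x y = Qpow rho m (x - y) 0.
Proof.
  revert x y. induction m as [|m IH]; intros x y; simpl.
  - destruct (Z.eqb_spec x y), (Z.eqb_spec (x - y) 0); try lia; reflexivity.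
  - rewrite Z.sub_0_r. apply sumR_ext. intros i _.
    rewrite IH, (IH (0 + Z.of_nat i)%Z). f_equal; [apply Q_translate|f_equal]; lia.
Qed.

Lemma QpowS_le m x y : (x <= y)%Z -> Qpow rho (S m) x y = 0.
Proof. intros H. simpl. replace (Z.to_nat (x - y)) with 0%nat by lia. reflexivity. Qed.

Lemma Qpow_lt m x y : (x < y)%Z -> Qpow rho m x y = 0.
Proof.
  intros H. destruct m as [|m].
  - simpl. destruct (Z.eqb_spec x y); [lia|reflexivity].
  - apply QpowS_le. lia.
Qed.

(* Split off the first jump [d + 1 -> d]; the other jumps satisfy
   [Q (d + 1) w = (1 - rho) Q d w] for [w < d]. *)
Lemma QpowS_succ m d : (0 <= d)%Z ->
  Qpow rho (S m) (d + 1) 0 = rho * Qpow rho m d 0 + (1 - rho) * Qpow rho (S m) d 0.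
Proof.
  intros Hd. cbn [Qpow]. rewrite !Z.sub_0_r.
  replace (Z.to_nat (d + 1)) with (S (Z.to_nat d)) by lia.
  cbn [sumR]. rewrite <- sumR_scal_l, Rplus_comm. f_equal.
  - rewrite Z2Nat.id by lia. unfold Q.
    destruct (Z.ltb_spec (0 + d) (d + 1)); [|lia].
    replace (d + 1 - (0 + d) - 1)%Z with 0%Z by lia. rewrite Z.add_0_l. simpl. ring.
  - apply sumR_ext. intros i Hi. unfold Q.
    destruct (Z.ltb_spec (0 + Z.of_nat i) (d + 1)), (Z.ltb_spec (0 + Z.of_nat i) d); try lia.
    replace (d + 1 - (0 + Z.of_nat i) - 1)%Z with (d - (0 + Z.of_nat i) - 1 + 1)%Z by lia.
    rewrite powerRZ_add by lra. simpl. ring.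
Qed.

Lemma Qstar_inv_QpowS m x z : Qstar_inv rho (Qpow rho (S m) x) z = Qpow rho m x z.
Proof.
  unfold Qstar_inv.
  rewrite (Qpow_translate (S m) x (z - 1)), (Qpow_translate (S m) x z), (Qpow_translate m x z).
  replace (x - (z - 1))%Z with (x - z + 1)%Z by lia.
  destruct (Z_lt_le_dec (x - z) 0).
  - rewrite !QpowS_le, Qpow_lt by lia. field. lra.
  - rewrite QpowS_succ by lia. field. lra.
Qed.

End Transition.

Lemma is_h_shift rho N1 N2 (X : nat -> Z) k (hX h1 : nat -> Z -> R) : 0 < rho < 1 ->
  is_h rho (N1 + N2) X (k + N2) hX -> is_h rho N1 X k h1 ->
  forall l, (l <= k)%nat -> forall w, hX (N2 + l)%nat w = h1 l w.
Proof.
  intros Hrho [HXstep [HXtop HXzero]] [H1step [H1top H1zero]].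
  apply (nat_down_ind (fun l => forall w, hX (N2 + l)%nat w = h1 l w)).
  - intros w. rewrite Nat.add_comm, HXtop, H1top.
    replace (N1 + N2 - (k + N2))%nat with (N1 - k)%nat by lia. reflexivity.
  - intros l Hl IH. apply (Qstar_inv_eq rho Hrho _ _ (X (N1 - l)%nat)).
    + intros w. rewrite HXstep, H1step by lia.
      replace (S (N2 + l)) with (N2 + S l)%nat by lia. apply IH.
    + rewrite H1zero by lia. replace (N1 - l)%nat with (N1 + N2 - (N2 + l))%nat by lia.
      apply HXzero. lia.
Qed.

Section Kernel.

Variables (rho : R) (m : nat) (Y : nat -> Z) (H : nat -> nat -> Z -> R).
Hypothesis Hrho : 0 < rho < 1.
Hypothesis HH : forall k, (k < m)%nat -> is_h rho m Y k (H k).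
Hypothesis HY : forall j, (1 <= j <= m)%nat -> (Y m <= Y j <= Y 1%nat)%Z.

Definition h_ext (k l : nat) (z : Z) : R := if (l <=? k)%nat then H k l z else 0.

Definition kernel (l : nat) (z3 z : Z) : R :=
  Qpow rho (m - l) z3 z
  - sumR m (fun k => (1 - rho) / rho * Qpow rho (m - k) z3 (Y (m - k)%nat) * h_ext k l z).

Lemma kernel_0 z3 z : kernel 0 z3 z = Qpow rho m z3 z - G0 rho m Y H z3 z.
Proof. unfold kernel, G0. rewrite Nat.sub_0_r. reflexivity. Qed.

Lemma kernel_m z3 z : kernel m z3 z = if Z.eqb z3 z then 1 else 0.
Proof.
  unfold kernel. rewrite Nat.sub_diag, sumR_eq0; [simpl; ring|].
  intros k Hk. unfold h_ext. destruct (Nat.leb_spec m k); [lia|ring].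
Qed.

Lemma Qstar_inv_h_ext k l z : (k < m)%nat ->
  Qstar_inv rho (h_ext k l) z = h_ext k (S l) z.
Proof.
  intros Hk. destruct (HH k Hk) as [Hstep [Htop _]]. unfold h_ext at 2.
  destruct (Nat.leb_spec (S l) k).
  - rewrite (Qstar_inv_ext rho _ (H k l)) by (intros w; unfold h_ext;
      destruct (Nat.leb_spec l k); [reflexivity|lia]).
    apply Hstep. lia.
  - destruct (Nat.eq_dec l k) as [->|Hne].
    + rewrite (Qstar_inv_ext rho _ (fun w => rho * powerRZ (1 - rho) (Y (m - k)%nat - w - 1)))
        by (intros w; unfold h_ext; rewrite Nat.leb_refl; apply Htop).
      apply Qstar_inv_geom. exact Hrho.
    + rewrite (Qstar_inv_ext rho _ (fun _ => 0)) by (intros w; unfold h_ext;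
        destruct (Nat.leb_spec l k); [lia|reflexivity]).
      unfold Qstar_inv. ring.
Qed.

Lemma Qstar_inv_kernel l z3 z : (l < m)%nat ->
  Qstar_inv rho (kernel l z3) z = kernel (S l) z3 z.
Proof.
  intros Hl. unfold kernel. rewrite Qstar_inv_minus.
  replace (m - l)%nat with (S (m - S l)) by lia.
  rewrite Qstar_inv_QpowS, Qstar_inv_sumR by exact Hrho. f_equal.
  apply sumR_ext. intros k Hk. rewrite Qstar_inv_scal_l, Qstar_inv_h_ext by exact Hk.
  reflexivity.
Qed.

(* Only the term [k = l] survives, and there [h_l(l, Y(m-l)) = rho / (1 - rho)]. *)
Lemma kernel_at_Y l z3 : (l < m)%nat -> kernel l z3 (Y (m - l)%nat) = 0.
Proof.
  intros Hl. unfold kernel. rewrite (sumR_single _ _ l Hl).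
  - unfold h_ext. rewrite Nat.leb_refl. destruct (HH l Hl) as [_ [Htop _]]. rewrite Htop.
    replace (Y (m - l)%nat - Y (m - l)%nat - 1)%Z with (- (1))%Z by lia.
    simpl. field. lra.
  - intros k Hk Hkl. unfold h_ext. destruct (Nat.leb_spec l k); [|ring].
    destruct (HH k Hk) as [_ [_ Hzero]]. rewrite Hzero by lia. ring.
Qed.

Lemma kernel_below l z3 z : (z3 < z)%Z -> (z3 < Y m)%Z -> kernel l z3 z = 0.
Proof.
  intros Hz Hm. unfold kernel. rewrite Qpow_lt by exact Hz.
  rewrite sumR_eq0; [ring|]. intros k Hk.
  specialize (HY (m - k)%nat ltac:(lia)). rewrite Qpow_lt by lia. ring.
Qed.

Lemma kernel_above l z3 z : (l <= m)%nat -> (Y 1%nat < z3)%Z -> (z < z3)%Z ->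
  kernel l z3 z = 0.
Proof.
  intros Hl HY1. revert l Hl z.
  apply (nat_down_ind (fun l => forall z, (z < z3)%Z -> kernel l z3 z = 0)).
  - intros z Hz. rewrite kernel_m. destruct (Z.eqb_spec z3 z); [lia|reflexivity].
  - intros l' Hl' IH z Hz.
    specialize (HY (m - l')%nat ltac:(lia)).
    apply (Qstar_inv_eq_interval rho Hrho (kernel l' z3) (fun _ => 0)
             (Z.min z (Y (m - l')%nat)) (z3 - 1) (Y (m - l')%nat)); try lia.
    + intros w Hw. rewrite Qstar_inv_kernel, IH by lia. unfold Qstar_inv. ring.
    + apply kernel_at_Y. exact Hl'.
Qed.

Section Solution.

Variables (f : Z -> R) (g : nat -> Z -> R).
Hypothesis Hg_top : forall z, g m z = f z.
Hypothesis Hg_step : forall l z, (l < m)%nat -> Qstar_inv rho (g l) z = g (S l) z.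
Hypothesis Hg_zero : forall l, (l < m)%nat -> g l (Y (m - l)%nat) = 0.

Lemma sumZ_kernel P n : (P <= Y m)%Z -> (Y 1%nat < P + Z.of_nat n)%Z ->
  forall l, (l <= m)%nat -> forall z, (P <= z < P + Z.of_nat n)%Z ->
  sumZ P n (fun z3 => kernel l z3 z * f z3) = g l z.
Proof.
  intros HP Hn.
  apply (nat_down_ind (fun l => forall z, (P <= z < P + Z.of_nat n)%Z ->
           sumZ P n (fun z3 => kernel l z3 z * f z3) = g l z)).
  - intros z Hz. rewrite Hg_top, (sumZ_single _ _ _ z Hz).
    + rewrite kernel_m, Z.eqb_refl. ring.
    + intros w Hw. rewrite kernel_m. destruct (Z.eqb_spec w z); [contradiction|ring].
  - intros l Hl IH z Hz.
    specialize (HY (m - l)%nat ltac:(lia)).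
    apply (Qstar_inv_eq_interval rho Hrho (fun z => sumZ P n (fun z3 => kernel l z3 z * f z3))
             (g l) P (P + Z.of_nat n - 1) (Y (m - l)%nat)); try lia.
    + intros w Hw. unfold sumZ. rewrite Qstar_inv_sumR, Hg_step by lia.
      rewrite <- IH by lia. apply sumR_ext. intros i _.
      rewrite Qstar_inv_scal_r, Qstar_inv_kernel by exact Hl. reflexivity.
    + rewrite Hg_zero by exact Hl. apply sumZ_eq0. intros z3 _.
      rewrite kernel_at_Y by exact Hl. ring.
Qed.

Lemma sumZ_to_Qpow_sub_G0 z :
  sumZ_to (fun z3 => (Qpow rho m z3 z - G0 rho m Y H z3 z) * f z3) (g O z).
Proof.
  set (P := Z.min z (Y m)).
  set (n := Z.to_nat (Z.max z (Y 1%nat) - P + 1)).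
  replace (g O z) with (sumZ P n (fun z3 => (Qpow rho m z3 z - G0 rho m Y H z3 z) * f z3)).
  - apply sumZ_to_finite_support. intros z3 Hz3. rewrite <- kernel_0.
    destruct Hz3.
    + rewrite kernel_below by lia. ring.
    + rewrite kernel_above by lia. ring.
  - rewrite <- (sumZ_kernel P n) by lia.
    apply sumR_ext. intros i _. rewrite kernel_0. reflexivity.
Qed.

End Solution.

End Kernel.

Theorem lemma2p5 (rho : R) (N1 N2 : nat) (X0 : nat -> Z) (k : nat) :
  0 < rho < 1 ->
  (0 < N1)%nat -> (0 < N2)%nat ->
  (forall i : nat, (1 <= i)%nat -> (i < N1 + N2)%nat -> (X0 (S i) < X0 i)%Z) ->
  (k <= N1 - 1)%nat ->
  forall (hX h1 : nat -> Z -> R) (H2 : nat -> nat -> Z -> R),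
    is_h rho (N1 + N2) X0 (k + N2) hX ->
    is_h rho N1 X0 k h1 ->
    (forall j : nat, (j < N2)%nat -> is_h rho N2 (fun i => X0 (N1 + i)%nat) j (H2 j)) ->
    forall z : Z,
      sumZ_to
        (fun z3 : Z => (Qpow rho N2 z3 z - G0 rho N2 (fun i => X0 (N1 + i)%nat) H2 z3 z) * h1 O z3)
        (hX O z).
Proof.
  intros Hrho _ _ Hdec _ hX h1 H2 HX Hh1 HH2 z.
  assert (Hshift := is_h_shift rho N1 N2 X0 k hX h1 Hrho HX Hh1).
  destruct HX as [HXstep [_ HXzero]].
  apply (sumZ_to_Qpow_sub_G0 rho N2 (fun i => X0 (N1 + i)%nat) H2 Hrho HH2).
  - intros j Hj. split; apply (strict_decr_antitone X0 1 (N1 + N2)); auto; lia.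
  - intros w. rewrite <- (Hshift 0%nat), Nat.add_0_r by lia. reflexivity.
  - intros l w Hl. apply HXstep. lia.
  - intros l Hl. replace (N1 + (N2 - l))%nat with (N1 + N2 - l)%nat by lia.
    apply HXzero. lia.
Qed.
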